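(* Let $S$ be either $\mathbb{Z}[j]=\{a+bj: a,b\in\mathbb{Z}\}$ or the Lipschitz order $\{r+sj: r,s\in\mathbb{Z}[i]\}=\{a+bi+cj+dk: a,b,c,d\in\mathbb{Z}\}$ in the Hamilton quaternions. Whenever $y,t\in S$ satisfy that $|y|^2$ divides $|t|^2$ in $\mathbb{Z}$, there exist $u,v\in S$ with $t=uv$ and $|u|^2=|y|^2$.
   Context: $|q|^2=q\overline{q}=a^2+b^2+c^2+d^2$ for $q=a+bi+cj+dk\in\mathbb{H}$. *)

From mathcomp Require Import all_boot all_order all_algebra.
Set Implicit Arguments. Unset Strict Implicit. Unset Printing Implicit Defensive.
Import Order.TTheory GRing.Theory Num.Theory.
Local Open Scope ring_scope.

(* q = re + im_i i + im_j j + im_k k with integer coordinates *)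
Record iquat := IQuat { qre : int; qii : int; qjj : int; qkk : int }.

(* Hamilton product: i^2 = j^2 = k^2 = ijk = -1 *)
Definition qmul (p q : iquat) : iquat :=
  IQuat (qre p * qre q - qii p * qii q - qjj p * qjj q - qkk p * qkk q)
        (qre p * qii q + qii p * qre q + qjj p * qkk q - qkk p * qjj q)
        (qre p * qjj q - qii p * qkk q + qjj p * qre q + qkk p * qii q)
        (qre p * qkk q + qii p * qjj q - qjj p * qii q + qkk p * qre q).

(* |q|^2 = q * conj q = a^2 + b^2 + c^2 + d^2 *)
Definition qnorm2 (q : iquat) : int :=
  qre q ^+ 2 + qii q ^+ 2 + qjj q ^+ 2 + qkk q ^+ 2.

Definition in_Zj (q : iquat) : Prop := qii q = 0 /\ qkk q = 0.

(* Lipschitz order: all a + b i + c j + d k with a,b,c,d in Z *)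
Definition in_Lipschitz (q : iquat) : Prop := True.

From mathcomp Require Import all_boot all_order all_algebra.
From mathcomp Require Import zify ring lra.
From Stdlib Require Import Classical.
Set Implicit Arguments. Unset Strict Implicit.
Import Order.TTheory GRing.Theory Num.Theory.
Local Open Scope ring_scope.

(* Lagrange-style descent.  Let p be an odd prime dividing |t|^2 but not t.
   Rounding the coordinates of t/p gives t = x + p k with |x|^2 = m p,
   0 < m < p, and p | conj(x) t.  If m is even, conj(x) = u w with |u|^2 = 2,
   and conj(w) satisfies the same with m/2.  If m is odd, rounding x modulo m
   gives x = y + m k' with |y|^2 = r m, 0 < r < m, and z = x conj(y) / m is
   integral with |z|^2 = r p and p | conj(z) t.  When m reaches 1 we have
   |u|^2 = p and t = u (conj(u) t / p).  The theorem follows by induction on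
   |y|^2: for a prime p | |y|^2, peel a common left factor of norm p, or p^2
   when p divides both y and t, off t while dividing |y|^2 by its norm; for
   p = 2 one of 1+i, 1+j, 1+k divides every element of even norm. *)

Definition qconj q := IQuat (qre q) (- qii q) (- qjj q) (- qkk q).
Definition qscale (c : int) q := IQuat (c * qre q) (c * qii q) (c * qjj q) (c * qkk q).
Definition qadd p q :=
  IQuat (qre p + qre q) (qii p + qii q) (qjj p + qjj q) (qkk p + qkk q).
Definition qone := IQuat 1 0 0 0.
Definition qzero := IQuat 0 0 0 0.
Definition qdvd (m : int) q := exists w, q = qscale m w.

Ltac qsolve := repeat match goal with q : iquat |- _ => destruct q end;
  rewrite /qmul /qconj /qscale /qadd /qone /qzero /qnorm2 /=; try congr IQuat; ring.

Lemma qmulA a b c : qmul a (qmul b c) = qmul (qmul a b) c. Proof. qsolve. Qed.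
Lemma qmul1q a : qmul qone a = a. Proof. qsolve. Qed.
Lemma qadd0q a : qadd qzero a = a. Proof. qsolve. Qed.
Lemma qscale0 a : qscale 0 a = qzero. Proof. qsolve. Qed.
Lemma qmulZl c a b : qmul (qscale c a) b = qscale c (qmul a b). Proof. qsolve. Qed.
Lemma qmulZr c a b : qmul a (qscale c b) = qscale c (qmul a b). Proof. qsolve. Qed.
Lemma qmul_conjr a : qmul a (qconj a) = qscale (qnorm2 a) qone. Proof. qsolve. Qed.
Lemma qmul_conjl a : qmul (qconj a) a = qscale (qnorm2 a) qone. Proof. qsolve. Qed.
Lemma qconjM a b : qconj (qmul a b) = qmul (qconj b) (qconj a). Proof. qsolve. Qed.
Lemma qconjZ c a : qconj (qscale c a) = qscale c (qconj a). Proof. qsolve. Qed.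
Lemma qconjK a : qconj (qconj a) = a. Proof. qsolve. Qed.
Lemma qnorm_conj a : qnorm2 (qconj a) = qnorm2 a. Proof. qsolve. Qed.
Lemma qnormM a b : qnorm2 (qmul a b) = qnorm2 a * qnorm2 b. Proof. qsolve. Qed.
Lemma qnormZ c a : qnorm2 (qscale c a) = c ^+ 2 * qnorm2 a. Proof. qsolve. Qed.

Lemma qnorm_ge0 a : 0 <= qnorm2 a.
Proof. rewrite /qnorm2; nia. Qed.

Lemma qnorm_eq0 a : qnorm2 a = 0 -> a = qzero.
Proof.
case: a => a b c d; rewrite /qnorm2 /= => N0.
have -> : a = 0 by nia. have -> : b = 0 by nia.
have -> : c = 0 by nia. have -> : d = 0 by nia. by [].
Qed.

Lemma qscale_inj c : c != 0 -> injective (qscale c).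
Proof.
move=> /eqP c_neq0 [a1 a2 a3 a4] [b1 b2 b3 b4] [/= E1 E2 E3 E4].
congr IQuat; nia.
Qed.

Lemma qdvd_coprime (p c : int) a b :
  coprimez p c -> qscale c a = qscale p b -> qdvd p a.
Proof.
case: a b => a1 a2 a3 a4 [b1 b2 b3 b4] pc [E1 E2 E3 E4].
have quot x y : c * x = p * y -> exists e, x = p * e.
  move=> cx; have : (p %| c * x)%Z by rewrite cx dvdz_mulr.
  by rewrite Gauss_dvdzr // => /dvdzP [e ->]; exists e; rewrite mulrC.
case: (quot _ _ E1) (quot _ _ E2) (quot _ _ E3) (quot _ _ E4)
  => [e1 ->] [e2 ->] [e3 ->] [e4 ->].
by exists (IQuat e1 e2 e3 e4).
Qed.

Lemma int_even_or_odd (m : int) : (exists s, m = 2 * s) \/ (exists s, m = 2 * s + 1).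
Proof.
have := divz_eq m 2; have := modz_ge0 m (isT : (2 : int) != 0).
have := ltz_pmod m (isT : (0 : int) < 2) => *.
have [r0|r1] : (m %% 2 = 0 \/ m %% 2 = 1)%Z by lia.
- by left; exists (m %/ 2)%Z; lia.
- by right; exists (m %/ 2)%Z; lia.
Qed.

Lemma coprimez_prime_lt (p : nat) (m : int) : prime p -> 0 < m < p%:Z -> coprimez p m.
Proof.
move=> p_pr /andP[m_gt0 m_lt]; rewrite coprimezE /= prime_coprime //.
apply/negP => pm; have m_pos : (0 < `|m|)%N by lia.
by have := dvdn_leq m_pos pm; lia.
Qed.

Lemma mulz_neq_prime (p : nat) (m n : int) : prime p -> 1 < m < p%:Z -> m * n != p%:Z.
Proof.
move=> p_pr m_bd; apply/eqP => mn_p.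
have : (p%:Z %| m * n)%Z by rewrite mn_p.
rewrite Gauss_dvdzr; last by apply: coprimez_prime_lt; lia.
case/dvdzP => q n_qp; move: mn_p; rewrite n_qp => mqp_p.
have p_gt0 : 0 < p%:Z by have := prime_gt0 p_pr; lia.
have : m * q = 1 by apply: (mulIf (lt0r_neq0 p_gt0)); rewrite mul1r -mulrA.
have [q_le0|q_ge1] : q <= 0 \/ 1 <= q by lia.
all: nia.
Qed.

Definition rdivz (a m : int) : int := ((a + (m %/ 2)%Z) %/ m)%Z.

Lemma half_odd (s : int) : ((2 * s + 1) %/ 2)%Z = s.
Proof.
have := divz_eq (2 * s + 1) 2; have := modz_ge0 (2 * s + 1) (isT : (2 : int) != 0).
have := ltz_pmod (2 * s + 1) (isT : (0 : int) < 2); lia.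
Qed.

Lemma rdivz_bound (a s : int) : 0 <= s ->
  - s <= a - (2 * s + 1) * rdivz a (2 * s + 1) <= s.
Proof.
move=> s_ge0; rewrite /rdivz half_odd; have m_gt0 : 0 < 2 * s + 1 by lia.
have := divz_eq (a + s) (2 * s + 1); have := modz_ge0 (a + s) (lt0r_neq0 m_gt0).
have := ltz_pmod (a + s) m_gt0; nia.
Qed.

Lemma rdivz0 (s : int) : 0 <= s -> rdivz 0 (2 * s + 1) = 0.
Proof. by move=> s_ge0; rewrite /rdivz half_odd add0r divz_small //; lia. Qed.

Definition qround m x :=
  IQuat (rdivz (qre x) m) (rdivz (qii x) m) (rdivz (qjj x) m) (rdivz (qkk x) m).
Definition qrem m x := qadd x (qscale (- m) (qround m x)).

Lemma qrem_eq m x : x = qadd (qrem m x) (qscale m (qround m x)).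
Proof. rewrite /qrem; qsolve. Qed.

Lemma qnorm_qrem (m s : int) x : 0 <= s -> m = 2 * s + 1 -> qnorm2 (qrem m x) < m ^+ 2.
Proof.
have sq_bound a : 0 <= s -> (a + - (2 * s + 1) * rdivz a (2 * s + 1)) ^+ 2 <= s ^+ 2.
  by move=> s_ge0; have := rdivz_bound a s_ge0; nia.
move=> s_ge0 ->; case: x => a b c d; rewrite /qrem /qround /qnorm2 /qadd /qscale /=.
have := sq_bound a s_ge0; have := sq_bound b s_ge0.
have := sq_bound c s_ge0; have := sq_bound d s_ge0.
set A := a + _; set B := b + _; set C := c + _; set D := d + _; lia.
Qed.

Lemma dvdz_qnorm_addZ y k m : (m %| qnorm2 (qadd y (qscale m k)) - qnorm2 y)%Z.
Proof.
apply/dvdzP; exists (2 * (qre y * qre k + qii y * qii k + qjj y * qjj k + qkk y * qkk k)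
  + m * qnorm2 k); qsolve.
Qed.

Lemma qdvd_conj_qrem m x c : qnorm2 x = m * c -> qdvd m (qmul (qconj (qrem m x)) x).
Proof.
move=> Nx; exists (qadd (qscale c qone) (qscale (-1) (qmul (qconj (qround m x)) x))).
move: Nx; case: x => a b d e; rewrite /qnorm2 /= => N.
rewrite /qrem /qround /qmul /qadd /qscale /qconj /qone /=; congr IQuat; lia.
Qed.

Lemma qmul_addZ_conj y k m r : qnorm2 y = m * r ->
  qmul (qadd y (qscale m k)) (qconj y) = qscale m (qadd (qscale r qone) (qmul k (qconj y))).
Proof.
case: y k => a b c d [k1 k2 k3 k4]; rewrite /qnorm2 /= => N.
rewrite /qmul /qadd /qscale /qconj /qone /=; congr IQuat; lia.
Qed.

Record admissible (S : iquat -> Prop) : Prop := Admissible {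
  adm1 : S qone;
  admM : forall a b, S a -> S b -> S (qmul a b);
  admC : forall a, S a -> S (qconj a);
  admD : forall a b, S a -> S b -> S (qadd a b);
  admZ : forall c a, S a -> S (qscale c a);
  admZV : forall c a, c != 0 -> S (qscale c a) -> S a;
  adm_round : forall (s : int) x, 0 <= s -> S x -> S (qround (2 * s + 1) x);
  adm_split2 : forall x, S x -> (2 %| qnorm2 x)%Z ->
    exists u w, [/\ S u, S w, x = qmul u w & qnorm2 u = 2] }.

Lemma sum_coords_even x : (2 %| qnorm2 x)%Z ->
  exists g, qre x + qii x + qjj x + qkk x = 2 * g.
Proof.
have sq_par (a : int) : exists h, a ^+ 2 = a + 2 * h.
  have [[s ->]|[s ->]] := int_even_or_odd a.
  - by exists (2 * s ^+ 2 - s); ring.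
  - by exists (2 * s ^+ 2 + s); ring.
case: x => a b c d /dvdzP [n]; rewrite /qnorm2 /=.
case: (sq_par a) (sq_par b) (sq_par c) (sq_par d) => [ha ->] [hb ->] [hc ->] [hd ->].
by move=> N; exists (n - ha - hb - hc - hd); lia.
Qed.

Lemma factor_1i a b c d e f : a + b = 2 * e -> c + d = 2 * f ->
  IQuat a b c d = qmul (IQuat 1 1 0 0) (IQuat e (e - a) f (f - c)).
Proof. by move=> Ee Ef; rewrite /qmul /=; congr IQuat; lia. Qed.

Lemma factor_1j a b c d e f : a + c = 2 * e -> b + d = 2 * f ->
  IQuat a b c d = qmul (IQuat 1 0 1 0) (IQuat e (f - d) (e - a) f).
Proof. by move=> Ee Ef; rewrite /qmul /=; congr IQuat; lia. Qed.

Lemma factor_1k a b c d e f : a + d = 2 * e -> b + c = 2 * f ->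
  IQuat a b c d = qmul (IQuat 1 0 0 1) (IQuat e f (f - b) (e - a)).
Proof. by move=> Ee Ef; rewrite /qmul /=; congr IQuat; lia. Qed.

Lemma Lipschitz_admissible : admissible in_Lipschitz.
Proof.
split=> //; case=> a b c d _ /sum_coords_even [g /= Eg].
(* a+b, a+c, a+d sum to 2a + (a+b+c+d), which is even, so one of them is even. *)
have [[e Ee]|[e Ee]] := int_even_or_odd (a + c).
  exists (IQuat 1 0 1 0), (IQuat e (g - e - d) (e - a) (g - e)).
  by split=> //; apply: factor_1j; lia.
have [[e' Ee']|[e' Ee']] := int_even_or_odd (a + b).
  exists (IQuat 1 1 0 0), (IQuat e' (e' - a) (g - e') (g - e' - c)).
  by split=> //; apply: factor_1i; lia.
set E := g + a - e - e' - 1; set F := e + e' + 1 - a.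
exists (IQuat 1 0 0 1), (IQuat E F (F - b) (E - a)).
by split=> //; apply: factor_1k; lia.
Qed.

Lemma Zj_admissible : admissible in_Zj.
Proof.
split.
- by [].
- by case=> a1 a2 a3 a4 [b1 b2 b3 b4] [/= -> ->] [/= -> ->]; split=> /=; ring.
- by case=> a1 a2 a3 a4 [/= -> ->]; split=> /=; ring.
- by case=> a1 a2 a3 a4 [b1 b2 b3 b4] [/= -> ->] [/= -> ->]; split=> /=; ring.
- by move=> c [a1 a2 a3 a4] [/= -> ->]; split=> /=; ring.
- by move=> c [a1 a2 a3 a4] /eqP c_neq0 [/= E2 E4]; split=> /=; nia.
- by move=> s [a1 a2 a3 a4] s_ge0 [/= -> ->]; split=> /=; apply: rdivz0.
- case=> a b c d [/= -> ->] /sum_coords_even [g /= Eg].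
  exists (IQuat 1 0 1 0), (IQuat g 0 (g - a) 0); split=> //.
  by rewrite (@factor_1j a 0 c 0 g 0) ?subrr //; lia.
Qed.

Section PrimeLeftFactor.

Variable S : iquat -> Prop.
Hypothesis HS : admissible S.

Lemma adm_qrem (m s : int) x : 0 <= s -> m = 2 * s + 1 -> S x -> S (qrem m x).
Proof.
move=> s_ge0 -> Sx; rewrite /qrem; apply: (admD HS Sx).
exact: (admZ HS _ (adm_round HS s_ge0 Sx)).
Qed.

Lemma factor_of_conj_mul (p : int) u t v : p != 0 -> S u -> S t ->
  qmul (qconj u) t = qscale p v -> qnorm2 u = p -> S v /\ t = qmul u v.
Proof.
move=> p_neq0 Su St Ev Nu; split.
  by apply: (admZV HS p_neq0); rewrite -Ev; exact: (admM HS (admC HS Su) St).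
apply: (qscale_inj p_neq0).
by rewrite -qmulZr -Ev qmulA qmul_conjr Nu qmulZl qmul1q.
Qed.

Variables (p : nat) (t : iquat).
Hypotheses (p_pr : prime p) (p_odd : odd p) (St : S t).

Lemma descent_even (s : int) x : S x -> qnorm2 x = 2 * s * p%:Z ->
  qdvd p%:Z (qmul (qconj x) t) ->
  exists2 x', S x' & qnorm2 x' = s * p%:Z /\ qdvd p%:Z (qmul (qconj x') t).
Proof.
move=> Sx Nx [W EW].
have two_dvd : (2 %| qnorm2 (qconj x))%Z by rewrite qnorm_conj Nx -mulrA dvdz_mulr.
have [u [w [Su Sw Ex Nu]]] := adm_split2 HS (admC HS Sx) two_dvd.
exists (qconj w); first exact: (admC HS Sw).
split.
  by have := congr1 qnorm2 Ex; rewrite qnorm_conj qnorm_conj qnormM Nu Nx; lia.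
have E2 : qmul (qconj u) (qmul (qconj x) t) = qscale 2 (qmul w t).
  by rewrite Ex qmulA qmulA qmul_conjl Nu qmulZl qmul1q qmulZl.
rewrite EW qmulZr in E2; rewrite qconjK.
apply: qdvd_coprime (esym E2).
by apply: coprimez_prime_lt p_pr _; have := odd_prime_gt2 p_odd p_pr; lia.
Qed.

Lemma descent_odd (s : int) x : 0 < s -> 2 * s + 1 < p%:Z -> S x ->
  qnorm2 x = (2 * s + 1) * p%:Z -> qdvd p%:Z (qmul (qconj x) t) ->
  exists r z, [/\ 0 < r < 2 * s + 1, S z, qnorm2 z = r * p%:Z
                  & qdvd p%:Z (qmul (qconj z) t)].
Proof.
move=> s_gt0 m_lt_p Sx Nx [W EW]; set m := 2 * s + 1 in m_lt_p Nx *.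
have m_gt1 : 1 < m by lia.
have m_neq0 : m != 0 by lia.
set k := qround m x; set y := qrem m x.
have Ex : x = qadd y (qscale m k) := qrem_eq m x.
have Sy : S y := adm_qrem (ltW s_gt0) (erefl m) Sx.
have [r Ny] : exists r, qnorm2 y = r * m.
  apply/dvdzP; have := dvdz_qnorm_addZ y k m.
  by rewrite -Ex Nx rpredBl // dvdz_mulr.
have r_ge0 : 0 <= r by have := qnorm_ge0 y; nia.
have r_lt_m : r < m.
  by have := qnorm_qrem x (ltW s_gt0) (erefl m); rewrite -/y Ny; nia.
have r_neq0 : r != 0.
  apply/eqP => r0; move: Ny; rewrite r0 mul0r => /qnorm_eq0 y0.
  have mk_p : m * qnorm2 k = p%:Z.
    apply: (mulfI m_neq0); move: Nx; rewrite Ex y0 qadd0q qnormZ => <-.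
    by rewrite mulrA -expr2.
  by move: (mulz_neq_prime (m := m) (qnorm2 k) p_pr (ltac:(lia))); rewrite mk_p eqxx.
set z := qadd (qscale r qone) (qmul k (qconj y)).
have Ez : qscale m z = qmul x (qconj y).
  by rewrite Ex; apply: esym; apply: qmul_addZ_conj; rewrite Ny mulrC.
exists r, z; split; first by lia.
- apply: (admD HS (admZ HS r (adm1 HS))).
  exact: (admM HS (adm_round HS (ltW s_gt0) Sx) (admC HS Sy)).
- have := congr1 qnorm2 Ez; rewrite qnormZ qnormM qnorm_conj Nx Ny => E.
  apply: (mulfI m_neq0); apply: (mulfI m_neq0).
  by rewrite mulrA -expr2 E; ring.
- have E2 : qscale m (qmul (qconj z) t) = qscale p%:Z (qmul y W).
    by rewrite -qmulZl -qconjZ Ez qconjM qconjK -qmulA EW qmulZr.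
  by apply: qdvd_coprime E2; apply: coprimez_prime_lt p_pr _; lia.
Qed.

Lemma descent (n : nat) m x : m < n%:Z -> 0 < m < p%:Z -> S x ->
  qnorm2 x = m * p%:Z -> qdvd p%:Z (qmul (qconj x) t) ->
  exists2 u, S u & qnorm2 u = p%:Z /\ qdvd p%:Z (qmul (qconj u) t).
Proof.
elim: n m x => [|n IH] m x m_lt m_bd Sx Nx Dx; first by lia.
have [m1|m_neq1] := eqVneq m 1; first by exists x; rewrite // Nx m1 mul1r.
have [[s Em]|[s Em]] := int_even_or_odd m; rewrite Em in m_lt m_bd m_neq1 Nx.
- have [x' Sx' [Nx' Dx']] := descent_even Sx Nx Dx.
  by apply: IH Sx' Nx' Dx'; lia.
- have [r [z [r_bd Sz Nz Dz]]] :=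
    descent_odd (s := s) (ltac:(lia)) (ltac:(lia)) Sx Nx Dx.
  by apply: IH Sz Nz Dz; lia.
Qed.

Lemma prime_left_factor : (p%:Z %| qnorm2 t)%Z -> ~ qdvd p%:Z t ->
  exists u v, [/\ S u, S v, t = qmul u v & qnorm2 u = p%:Z].
Proof.
case/dvdzP => c Nt t_ndvd; have p_gt2 := odd_prime_gt2 p_odd p_pr.
have [s Ep] : exists s, p%:Z = 2 * s + 1.
  by have [[s Es]|[s Es]] := int_even_or_odd p%:Z; [move: p_odd; lia | exists s].
set k := qround p%:Z t; set x := qrem p%:Z t.
have Et : t = qadd x (qscale p%:Z k) := qrem_eq p%:Z t.
have s_ge0 : 0 <= s by lia.
have Sx : S x := adm_qrem s_ge0 Ep St.
have [m Nx] : exists m, qnorm2 x = m * p%:Z.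
  apply/dvdzP; have := dvdz_qnorm_addZ x k p%:Z.
  by rewrite -Et Nt rpredBl // dvdz_mull.
have m_ge0 : 0 <= m by have := qnorm_ge0 x; nia.
have m_lt_p : m < p%:Z by have := qnorm_qrem t s_ge0 Ep; rewrite -/x Nx; nia.
have m_neq0 : m != 0.
  apply/eqP => m0; apply: t_ndvd; exists k.
  by move: Nx; rewrite m0 mul0r => /qnorm_eq0 x0; rewrite Et x0 qadd0q.
have Dx : qdvd p%:Z (qmul (qconj x) t) by apply: qdvd_conj_qrem; rewrite Nt mulrC.
have [u Su [Nu [v Ev]]] :=
  descent (n := `|m|.+1) (m := m) (ltac:(lia)) (ltac:(lia)) Sx Nx Dx.
have p_neq0 : p%:Z != 0 by lia.
have [Sv Etv] := factor_of_conj_mul p_neq0 Su St Ev Nu.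
by exists u, v.
Qed.

End PrimeLeftFactor.

Definition factors_with_norm (S : iquat -> Prop) y t :=
  exists u v, S u /\ S v /\ t = qmul u v /\ qnorm2 u = qnorm2 y.

Section NormFactorisation.

Variable S : iquat -> Prop.
Hypothesis HS : admissible S.

Lemma factors_with_norm_mull w y y2 t1 : S w -> qnorm2 y = qnorm2 w * qnorm2 y2 ->
  factors_with_norm S y2 t1 -> factors_with_norm S y (qmul w t1).
Proof.
move=> Sw Ny [u [v [Su [Sv [Et1 Nu]]]]].
exists (qmul w u), v; split; first exact: (admM HS Sw Su).
by split=> //; split; [rewrite Et1 qmulA | rewrite qnormM Nu Ny].
Qed.

Lemma peel_odd_prime (p : nat) y t : prime p -> odd p ->
  (p%:Z %| qnorm2 y)%Z -> (p%:Z %| qnorm2 t)%Z -> S y -> S t ->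
  exists w y2 t1, 1 < qnorm2 w /\
    [/\ S w, S y2, S t1, t = qmul w t1 & qnorm2 y = qnorm2 w * qnorm2 y2].
Proof.
move=> p_pr p_odd p_y p_t Sy St.
have p_gt2 := odd_prime_gt2 p_odd p_pr; have p_neq0 : p%:Z != 0 by lia.
have [[y' Ey]|y_ndvd] := classic (qdvd p%:Z y);
have [[t' Et]|t_ndvd] := classic (qdvd p%:Z t).
- have Sy' : S y' by apply: (admZV HS p_neq0); rewrite -Ey.
  have St' : S t' by apply: (admZV HS p_neq0); rewrite -Et.
  exists (qscale p%:Z qone), y', t'; split; first by rewrite qnormZ /qnorm2 /=; nia.
  split=> //; first exact: (admZ HS _ (adm1 HS)).
  + by rewrite Et qmulZl qmul1q.
  + by rewrite Ey !qnormZ /qnorm2 /=; ring.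
- have [w [t1 [Sw St1 Et Nw]]] := prime_left_factor HS p_pr p_odd St p_t t_ndvd.
  have Sy' : S y' by apply: (admZV HS p_neq0); rewrite -Ey.
  exists w, (qmul w y'), t1; split; first by rewrite Nw; lia.
  split=> //; first exact: (admM HS Sw Sy').
  by rewrite Ey qnormZ qnormM Nw expr2 mulrA.
- have [w [y2 [Sw Sy2 Ey Nw]]] := prime_left_factor HS p_pr p_odd Sy p_y y_ndvd.
  have St' : S t' by apply: (admZV HS p_neq0); rewrite -Et.
  exists w, y2, (qmul (qconj w) t'); split; first by rewrite Nw; lia.
  split=> //; first exact: (admM HS (admC HS Sw) St').
  + by rewrite Et qmulA qmul_conjr Nw qmulZl qmul1q.
  + by rewrite Ey qnormM.
- have [w [t1 [Sw St1 Et Nw]]] := prime_left_factor HS p_pr p_odd St p_t t_ndvd.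
  have [w' [y2 [Sw' Sy2 Ey Nw']]] := prime_left_factor HS p_pr p_odd Sy p_y y_ndvd.
  exists w, y2, t1; split; first by rewrite Nw; lia.
  by split=> //; rewrite Ey qnormM Nw Nw'.
Qed.

Lemma peel_prime (p : nat) y t : prime p ->
  (p%:Z %| qnorm2 y)%Z -> (qnorm2 y %| qnorm2 t)%Z -> S y -> S t ->
  exists w y2 t1, 1 < qnorm2 w /\
    [/\ S w, S y2, S t1, t = qmul w t1 & qnorm2 y = qnorm2 w * qnorm2 y2].
Proof.
move=> p_pr p_y y_t Sy St; have p_t := dvdz_trans p_y y_t.
have [p2|p_odd] := even_prime p_pr.
  2: exact: (peel_odd_prime p_pr p_odd p_y p_t Sy St).
rewrite p2 in p_y p_t.
have [w [t1 [Sw St1 Et Nw]]] := adm_split2 HS St p_t.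
have [w' [y2 [Sw' Sy2 Ey Nw']]] := adm_split2 HS Sy p_y.
exists w, y2, t1; split; first by rewrite Nw.
by split=> //; rewrite Ey qnormM Nw Nw'.
Qed.

Lemma factors_with_norm_of_dvd y t : S y -> S t ->
  (qnorm2 y %| qnorm2 t)%Z -> factors_with_norm S y t.
Proof.
have [n] := ubnP `|qnorm2 y|%N; elim: n y t => // n IH y t Ny_lt Sy St y_t.
have Ny_ge0 := qnorm_ge0 y.
have S0 : S qzero by rewrite -(qscale0 qone); exact: (admZ HS 0 (adm1 HS)).
have [Ny0|Ny_neq0] := eqVneq (qnorm2 y) 0.
  move: y_t; rewrite Ny0 dvd0z => /eqP /qnorm_eq0 ->.
  by exists qzero, qzero; rewrite Ny0.
have [Ny1|Ny_neq1] := eqVneq (qnorm2 y) 1.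
  by exists qone, t; rewrite qmul1q Ny1; split; [exact: (adm1 HS) | ].
have p_pr : prime (pdiv `|qnorm2 y|) by apply: pdiv_prime; lia.
have p_y : ((pdiv `|qnorm2 y|)%:Z %| qnorm2 y)%Z by exact: pdiv_dvd.
have [w [y2 [t1 [Nw_gt1 [Sw Sy2 St1 Et Ny]]]]] := peel_prime p_pr p_y y_t Sy St.
rewrite Et; apply: (factors_with_norm_mull Sw Ny); apply: IH => //.
  have : qnorm2 y2 < qnorm2 y by move: Ny_neq0; rewrite Ny; have := qnorm_ge0 y2; nia.
  by move: Ny_lt; have := qnorm_ge0 y2; lia.
by move: y_t; rewrite Et Ny qnormM dvdz_mul2l //; lia.
Qed.

End NormFactorisation.

Theorem mainTheorem12 (S : iquat -> Prop)
  (HS : S = in_Zj \/ S = in_Lipschitz)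
  (y t : iquat) (Hy : S y) (Ht : S t)
  (Hdvd : (qnorm2 y %| qnorm2 t)%Z) :
  exists u v : iquat, S u /\ S v /\ t = qmul u v /\ qnorm2 u = qnorm2 y.
Proof.
have adm : admissible S.
  by case: HS => ->; [exact: Zj_admissible | exact: Lipschitz_admissible].
exact: (factors_with_norm_of_dvd adm Hy Ht Hdvd).
Qed.
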